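(* Let $\mathcal A$ be a commutative semiring with negation map $(-)$. For all $A,B\in M_n(\mathcal A)$, $|A|\,|B|\preceq_\circ|AB|$.
   Context: A commutative semiring: commutative associative addition with neutral $\mathbb 0$, commutative associative multiplication with identity $\mathbb 1$, distributive, $x\mathbb 0=\mathbb 0$. Negation map: $(-):\mathcal A\to\mathcal A$ with $(-)(x+y)=(-)x+(-)y$, $(-)((-)x)=x$, $(-)(xy)=((-)x)y$. Write $x(-)y:=x+((-)y)$, $x^\circ:=x(-)x$; $x\preceq_\circ y$ iff $y=x+z^\circ$ for some $z\in\mathcal A$. For a permutation $\pi$, $(-)^\pi x=x$ if $\pi$ is even and $(-)x$ if odd. The $(-)$-determinant of $A=(a_{ij})$ is $|A|=\sum_{\pi\in S_n}(-)^\pi\prod_i a_{i,\pi(i)}$. *)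

From HB Require Import structures.
From mathcomp Require Import all_boot all_order all_algebra all_fingroup.
Set Implicit Arguments. Unset Strict Implicit. Unset Printing Implicit Defensive.
Import GRing.Theory.
Local Open Scope ring_scope.

Definition negation_map (A : comPzSemiRingType) (neg : A -> A) : Prop :=
  [/\ forall x y : A, neg (x + y) = neg x + neg y,
      forall x : A, neg (neg x) = x &
      forall x y : A, neg (x * y) = neg x * y].

Definition neg_sign (A : comPzSemiRingType) (neg : A -> A) (n : nat)
  (s : 'S_n) (x : A) : A := if odd_perm s then neg x else x.

Definition neg_det (A : comPzSemiRingType) (neg : A -> A) (n : nat)
  (M : 'M[A]_n) : A :=
  \sum_(s : 'S_n) neg_sign neg s (\prod_(i < n) M i (s i)).

Definition quasi_zero (A : comPzSemiRingType) (neg : A -> A) (x : A) : A :=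
  x + neg x.

Definition circ_le (A : comPzSemiRingType) (neg : A -> A) (x y : A) : Prop :=
  exists z : A, y = x + quasi_zero neg z.

From HB Require Import structures.
From mathcomp Require Import all_boot all_order all_algebra all_fingroup.
Local Open Scope ring_scope.
Import GRing.Theory.

Set Implicit Arguments.
Unset Strict Implicit.

(* Expanding |MN| by multilinearity in the rows gives a sum over all maps
   f : [n] -> [n] of (prod_i M_{i,f(i)}) |N_f|, where N_f has row f(i) of N as
   its i-th row.  The bijective f contribute (-)^f |N| each, i.e. |M| |N| in
   total.  For a non-injective f two rows of N_f coincide, and then the
   transposition of those rows pairs each even permutation with an odd one
   carrying the same product, so |N_f| = z + (-)z is a quasi-zero; sums and
   multiples of quasi-zeros are quasi-zeros. *)

Lemma sum_injective_ffun (R : nmodType) n (F : {ffun 'I_n -> 'I_n} -> R) :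
  \sum_(f : {ffun 'I_n -> 'I_n} | injectiveb f) F f = \sum_(s : 'S_n) F (pval s).
Proof.
rewrite (reindex (@pval _)) /=; last first.
  by exists (insubd (1%g : 'S_n)) => /= f inj_f; first apply: val_inj;
    apply: insubdK.
by apply: eq_bigl => s; rewrite (valP s).
Qed.

Section NegationMap.
Variables (A : comPzSemiRingType) (neg : A -> A).
Hypothesis hneg : negation_map neg.

Lemma negD x y : neg (x + y) = neg x + neg y. Proof. by case: hneg. Qed.
Lemma negK x : neg (neg x) = x. Proof. by case: hneg. Qed.
Lemma negMl x y : neg (x * y) = neg x * y. Proof. by case: hneg. Qed.

Lemma negMr x y : neg (x * y) = x * neg y.
Proof. by rewrite mulrC negMl mulrC. Qed.

Lemma neg0 : neg 0 = 0.
Proof. by have := negMl 0 0; rewrite mul0r mulr0. Qed.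

Lemma neg_sum I r (P : pred I) (F : I -> A) :
  neg (\sum_(i <- r | P i) F i) = \sum_(i <- r | P i) neg (F i).
Proof. exact: (big_morph neg negD neg0). Qed.

Lemma neg_signMl n (s : 'S_n) x y :
  neg_sign neg s x * y = neg_sign neg s (x * y).
Proof. by rewrite /neg_sign; case: odd_perm; rewrite ?negMl. Qed.

Lemma neg_signMr n (s : 'S_n) x y :
  x * neg_sign neg s y = neg_sign neg s (x * y).
Proof. by rewrite /neg_sign; case: odd_perm; rewrite ?negMr. Qed.

Lemma neg_sign_sum n (s : 'S_n) I r (P : pred I) (F : I -> A) :
  neg_sign neg s (\sum_(i <- r | P i) F i)
  = \sum_(i <- r | P i) neg_sign neg s (F i).
Proof. by rewrite /neg_sign; case: odd_perm; rewrite ?neg_sum. Qed.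

Lemma neg_signM n (s t : 'S_n) x :
  neg_sign neg (s * t)%g x = neg_sign neg s (neg_sign neg t x).
Proof.
by rewrite /neg_sign odd_permM; case: (odd_perm s); case: (odd_perm t);
  rewrite /= ?negK.
Qed.

Definition is_quasi_zero (x : A) : Prop := exists z, x = quasi_zero neg z.

Lemma quasi_zero_sum I r (P : pred I) (F : I -> A) :
  (forall i, P i -> is_quasi_zero (F i)) ->
  is_quasi_zero (\sum_(i <- r | P i) F i).
Proof.
move=> qzF; apply: big_ind => //.
  by exists 0; rewrite /quasi_zero neg0 addr0.
by move=> _ _ [x ->] [y ->]; exists (x + y); rewrite /quasi_zero negD addrACA.
Qed.

Lemma quasi_zeroMl c x : is_quasi_zero x -> is_quasi_zero (c * x).
Proof. by case=> z ->; exists (c * z); rewrite /quasi_zero mulrDr negMr. Qed.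

Lemma neg_det_rowsub_perm n (s : 'S_n) (N : 'M[A]_n) :
  neg_det neg (rowsub s N) = neg_sign neg s (neg_det neg N).
Proof.
rewrite /neg_det neg_sign_sum (reindex_inj (mulgI s)).
apply: eq_bigr => t _; rewrite neg_signM; congr (neg_sign _ s _).
congr (neg_sign _ t _); rewrite [RHS](reindex_perm s).
by apply: eq_bigr => i _; rewrite mxE permM.
Qed.

Lemma neg_det_eq_rows n (N : 'M[A]_n) (i1 i2 : 'I_n) :
  i1 != i2 -> row i1 N = row i2 N -> is_quasi_zero (neg_det neg N).
Proof.
move=> i12 /rowP eqN; pose t := tperm i1 i2.
pose Y (s : 'S_n) := \prod_i N i (s i).
have Y_tperm s : Y (t * s)%g = Y s.
  rewrite /Y (reindex_perm t); apply: eq_bigr => k _.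
  rewrite permM tpermK; have := eqN (s k); rewrite !mxE.
  by rewrite /t; case: tpermP => // ->.
exists (\sum_(s : 'S_n | ~~ odd_perm s) Y s).
rewrite /neg_det /quasi_zero (bigID (fun s : 'S_n => odd_perm s)) /=.
rewrite addrC neg_sum; congr (_ + _).
  by apply: eq_bigr => s /negbTE odd_s; rewrite /neg_sign odd_s.
rewrite (reindex_inj (mulgI t)) /=.
apply: eq_big => [s | s]; rewrite odd_mul_tperm i12 //= => /negbTE odd_s.
rewrite /neg_sign odd_mul_tperm i12 /= odd_s /=.
by congr neg; apply: Y_tperm.
Qed.

Lemma neg_det_mulmx n (M N : 'M[A]_n) :
  neg_det neg (M *m N)
  = \sum_(f : {ffun 'I_n -> 'I_n}) (\prod_i M i (f i)) * neg_det neg (rowsub f N).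
Proof.
rewrite /neg_det; under [RHS]eq_bigr do rewrite big_distrr.
rewrite [RHS]exchange_big; apply: eq_bigr => /= s _.
under eq_bigr do rewrite mxE.
rewrite bigA_distr_bigA /= neg_sign_sum.
apply: eq_bigr => f _; rewrite neg_signMr -big_split /=.
by congr (neg_sign _ s _); apply: eq_bigr => i _; rewrite !mxE.
Qed.

Lemma neg_det_mulmx_injective n (M N : 'M[A]_n) :
  \sum_(f : {ffun 'I_n -> 'I_n} | injectiveb f)
     (\prod_i M i (f i)) * neg_det neg (rowsub f N)
  = neg_det neg M * neg_det neg N.
Proof.
rewrite sum_injective_ffun [neg_det neg M]/neg_det big_distrl.
apply: eq_bigr => s _.
have -> : rowsub (pval s) N = rowsub s N.
  by apply/matrixP => i j; rewrite !mxE pvalE.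
rewrite neg_det_rowsub_perm neg_signMr /= neg_signMl.
by under eq_bigr do rewrite pvalE.
Qed.

Lemma neg_det_mulmx_noninjective n (M N : 'M[A]_n) :
  is_quasi_zero (\sum_(f : {ffun 'I_n -> 'I_n} | ~~ injectiveb f)
                   (\prod_i M i (f i)) * neg_det neg (rowsub f N)).
Proof.
apply: quasi_zero_sum => f /injectivePn[i1 [i2 i12 f12]].
apply: quasi_zeroMl; apply: (neg_det_eq_rows i12).
by apply/rowP => j; rewrite !mxE f12.
Qed.

End NegationMap.

Theorem theorem8p22 (A : comPzSemiRingType) (neg : A -> A)
  (hneg : negation_map neg) (n : nat) (M N : 'M[A]_n) :
  circ_le neg (neg_det neg M * neg_det neg N) (neg_det neg (M *m N)).
Proof.
have [z noninj] := neg_det_mulmx_noninjective hneg M N.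
exists z; rewrite [LHS](neg_det_mulmx hneg).
rewrite (bigID (fun f : {ffun 'I_n -> 'I_n} => injectiveb f)) /=.
by rewrite (neg_det_mulmx_injective hneg) noninj.
Qed.
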